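(* Let $w_1,\dots,w_n\in\mathbb{R}^3$ be vectors whose projections $u_k=\pi(w_k)$ to the $xy$-plane satisfy $u_1+\dots+u_n=0$. Then there is an ordering $\sigma$ of the vectors such that every embedded realization of $(u_1,\dots,u_n)$ in the order $\sigma$ is the unknot.
   Context: Let $\pi:\mathbb{R}^3\to\mathbb{R}^2$, $(x,y,z)\mapsto(x,y)$, be the projection to the $xy$-plane. Let $u_1,\dots,u_n\in\mathbb{R}^2$ have sum $0$ and let $\sigma$ be a permutation of $\{1,\dots,n\}$. A realization of these vectors in the order $\sigma$ is a closed polygonal curve in $\mathbb{R}^3$ with vertices $p_0,p_1,\dots,p_n=p_0$ such that $\pi(p_k-p_{k-1})=u_{\sigma(k)}$ for $k=1,\dots,n$. Equivalently, the vectors are placed tip-to-tail in the plane in the order $\sigma$, and heights ($z$-coordinates) are chosen arbitrarily for the vertices. A realization is embedded if it is a simple closed curve, in which case it is a knot. *)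

From HB Require Import structures.
From mathcomp Require Import all_boot all_order all_algebra all_fingroup.
From mathcomp Require Import reals.
From Stdlib Require Import Relations.
Set Implicit Arguments. Unset Strict Implicit. Unset Printing Implicit Defensive.
Import Order.TTheory GRing.Theory Num.Theory.
Local Open Scope ring_scope.

Section Knots.
Variable R : realType.

Definition proj_xy (w : 'rV[R]_3) : 'rV[R]_2 :=
  \row_(i < 2) w 0 (widen_ord (isT : (2 <= 3)%N) i).

(* A closed polygonal curve is given by its cyclic list of vertices
   P = [p_0; ...; p_(m-1)], with edges p_i -> p_((i+1) mod m). *)
Definition vtx (P : seq 'rV[R]_3) (i : nat) : 'rV[R]_3 := nth 0 P (i %% size P).

Definition on_edge (P : seq 'rV[R]_3) (i : nat) (s : R) : 'rV[R]_3 :=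
  vtx P i + s *: (vtx P i.+1 - vtx P i).

Definition on_curve (P : seq 'rV[R]_3) (x : 'rV[R]_3) : Prop :=
  exists i s, (i < size P)%N /\ 0 <= s <= 1 /\ x = on_edge P i s.

(* embedded = simple closed curve: the piecewise-linear parametrization
   [0, m) -> R^3 is injective (and the curve is nonempty). *)
Definition simple_polygon (P : seq 'rV[R]_3) : Prop :=
  (0 < size P)%N /\
  forall i j s t, (i < size P)%N -> (j < size P)%N ->
    0 <= s < 1 -> 0 <= t < 1 -> on_edge P i s = on_edge P j t -> i = j /\ s = t.

Definition in_segment (a b x : 'rV[R]_3) : Prop :=
  exists s, 0 <= s <= 1 /\ x = a + s *: (b - a).

Definition in_triangle (a b c x : 'rV[R]_3) : Prop :=
  exists l1 l2 l3, 0 <= l1 /\ 0 <= l2 /\ 0 <= l3 /\ l1 + l2 + l3 = 1 /\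
    x = l1 *: a + l2 *: b + l3 *: c.

(* Reidemeister's elementary (Delta-) move: replace the edge [a,b] by the two
   edges [a,c],[c,b], where the triangle abc meets the knot only in [a,b]. *)
Definition delta_move (P Q : seq 'rV[R]_3) : Prop :=
  exists a b c rest, P = a :: b :: rest /\ Q = a :: c :: b :: rest /\
    forall x, in_triangle a b c x -> on_curve P x -> in_segment a b x.

Definition poly_step (P Q : seq 'rV[R]_3) : Prop :=
  simple_polygon P /\ simple_polygon Q /\
  ((exists k, Q = rot k P) \/ delta_move P Q \/ delta_move Q P).

(* a polygonal knot is the unknot iff it is combinatorially equivalent
   to a (nondegenerate) triangle *)
Definition is_unknot (P : seq 'rV[R]_3) : Prop :=
  exists T, size T = 3%N /\ simple_polygon T /\ clos_refl_sym_trans _ poly_step P T.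

(* Realization of (u_1..u_n) in the order sigma, with starting planar point c
   and heights h: vertex k (k = 0..n-1) is
   (c + u_(sigma 0) + ... + u_(sigma (k-1)), h k). *)
Definition realization_vertex (n : nat) (u : 'I_n -> 'rV[R]_2) (sigma : 'S_n)
  (c : 'rV[R]_2) (h : 'I_n -> R) (k : 'I_n) : 'rV[R]_3 :=
  \row_(i < 3) (if (i < 2)%N
                then (c + \sum_(j < n | (j < k)%N) u (sigma j)) 0 (inord i)
                else h k).

Definition realization (n : nat) (u : 'I_n -> 'rV[R]_2) (sigma : 'S_n)
  (c : 'rV[R]_2) (h : 'I_n -> R) : seq 'rV[R]_3 :=
  [seq realization_vertex u sigma c h k | k <- enum 'I_n].

End Knots.

From Stdlib Require Import Relations.
From HB Require Import structures.
From mathcomp Require Import all_boot all_order all_algebra all_fingroup.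
From mathcomp Require Import reals.
From mathcomp Require Import ring lra zify.
Set Implicit Arguments. Unset Strict Implicit. Unset Printing Implicit Defensive.
Import Order.TTheory GRing.Theory Num.Theory.
Local Open Scope ring_scope.

(* Order the projected edge vectors by their argument. Any realization in
   this order then projects onto a convex polygon traversed once (possibly
   degenerate), so some point p of the plane sees it star-like: every ray from
   p meets it at most once (take the centroid of the vertices, or any point off
   the line when the polygon is flat). Every ray from a point O over p then
   meets the knot at most once, and coning the knot off from O by Delta-moves,
   one edge at a time, shrinks it to a triangle. *)

Section StarCenter.
Variable R : realFieldType.

Definition star_center (V : lmodType R) (C : V -> Prop) (O : V) : Prop :=
  ~ C O /\ forall x y l, C x -> C y -> 0 < l -> x - O = l *: (y - O) -> x = y.

Lemma star_center_lt1 (V : lmodType R) (C : V -> Prop) (O : V) : ~ C O ->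
    (forall x y l, C x -> C y -> 0 < l < 1 -> x - O = l *: (y - O) -> False) ->
  star_center C O.
Proof.
move=> nCO no_ray; split=> // x y l Cx Cy l_gt0 E.
case: (ltrgtP l 1) => [l_lt1|l_gt1|l1]; last by move: E; rewrite l1 scale1r => /addIr.
- by case: (no_ray x y l Cx Cy _ E); rewrite l_gt0.
- exfalso; apply: (no_ray y x l^-1 Cy Cx); first by rewrite invr_gt0 l_gt0 invf_lt1.
  by rewrite E scalerA mulVf ?scale1r // gt_eqF.
Qed.

Lemma star_center_preimage (V W : lmodType R) (f : V -> W) (C : V -> Prop) (D : W -> Prop) O :
    {morph f : x y / x - y} -> (forall l, {morph f : x / l *: x}) ->
    (forall x, C x -> D (f x)) -> star_center D (f O) ->
  star_center C O.
Proof.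
move=> fB fZ fC [nDO starD]; split=> [/fC//|x y l Cx Cy l_gt0 E].
have fE : f x - f O = l *: (f y - f O) by rewrite -!fB E fZ.
have fxy := starD _ _ _ (fC x Cx) (fC y Cy) l_gt0 fE.
have : (1 - l) *: (f y - f O) = 0 by rewrite scalerBl scale1r -fE fxy subrr.
move/eqP; rewrite scaler_eq0 subr_eq0 => /orP[/eqP l1|].
  by move: E; rewrite -l1 scale1r => /addIr.
by rewrite subr_eq0 => /eqP fyO; case: nDO; rewrite -fyO; apply: fC.
Qed.

End StarCenter.

Section AngularOrder.
Variable R : realFieldType.
Implicit Types a b c v : 'rV[R]_2.

Lemma rV2P a b : a 0 0 = b 0 0 -> a 0 1 = b 0 1 -> a = b.
Proof.
move=> e0 e1; apply/rowP => -[[|[|//]] i].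
- by rewrite (_ : Ordinal i = 0) //; apply: val_inj.
- by rewrite (_ : Ordinal i = 1) //; apply: val_inj.
Qed.

Lemma rV2_eq0 a : (a == 0) = (a 0 0 == 0) && (a 0 1 == 0).
Proof.
apply/eqP/andP => [->|[/eqP e0 /eqP e1]]; first by rewrite !mxE.
by apply: rV2P; rewrite !mxE.
Qed.

Definition cross a b : R := a 0 0 * b 0 1 - a 0 1 * b 0 0.

Lemma crossC a b : cross a b = - cross b a.
Proof. rewrite /cross; ring. Qed.

Lemma crossvv a : cross a a = 0.
Proof. rewrite /cross; ring. Qed.

Lemma cross0l a : cross 0 a = 0.
Proof. by rewrite /cross !mxE; ring. Qed.

Lemma cross0r a : cross a 0 = 0.
Proof. by rewrite /cross !mxE; ring. Qed.

Lemma crossDr v a b : cross v (a + b) = cross v a + cross v b.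
Proof. by rewrite /cross !mxE; ring. Qed.

Lemma crossBr v a b : cross v (a - b) = cross v a - cross v b.
Proof. by rewrite /cross !mxE; ring. Qed.

Lemma crossZr v (l : R) a : cross v (l *: a) = l * cross v a.
Proof. by rewrite /cross !mxE; ring. Qed.

Lemma cross_sumr v I (r : seq I) (P : pred I) (F : I -> 'rV[R]_2) :
  cross v (\sum_(i <- r | P i) F i) = \sum_(i <- r | P i) cross v (F i).
Proof. exact: (big_morph _ (crossDr v) (cross0r v)). Qed.

Lemma cross_cyclic a b c :
  (cross a b * c 0 0 + cross b c * a 0 0 + cross c a * b 0 0 = 0) /\
  (cross a b * c 0 1 + cross b c * a 0 1 + cross c a * b 0 1 = 0).
Proof. rewrite /cross; split; ring. Qed.

Lemma cross_parallel v a b : v != 0 -> cross v a = 0 -> cross v b = 0 -> cross a b = 0.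
Proof.
rewrite rV2_eq0 negb_and => v_neq0 va vb; have [e0 e1] := cross_cyclic a b v.
rewrite [cross b v]crossC va vb in e0 e1.
case/orP: v_neq0 => v_neq0; apply: (mulIf v_neq0); rewrite mul0r.
- by rewrite -e0; ring.
- by rewrite -e1; ring.
Qed.

(* Nonzero vectors are ordered by their argument in [0, 2 pi): class 0 is the
   half-open upper half-plane, class 1 the lower one; the zero vector comes last. *)
Definition upper_half a : bool := (0 < a 0 1) || ((a 0 1 == 0) && (0 < a 0 0)).

Definition arg_class a : nat := if upper_half a then 0 else if a != 0 then 1 else 2.

Definition arg_le a b : bool :=
  (arg_class a < arg_class b)%N || ((arg_class a == arg_class b) && (0 <= cross a b)).

Lemma arg_classP a :
  [/\ arg_class a = 0%N -> 0 < a 0 1 \/ (a 0 1 = 0 /\ 0 < a 0 0),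
      arg_class a = 1%N -> a 0 1 < 0 \/ (a 0 1 = 0 /\ a 0 0 < 0) &
      arg_class a = 2%N -> a = 0].
Proof.
rewrite /arg_class /upper_half; case: ifP => [/orP[a1|/andP[/eqP a1 a0]]|U].
- by split=> //; left.
- by split=> //; right.
case: ifP => [a_neq0|/negbT/negPn/eqP //]; split=> // _.
case: (ltrgtP (a 0 1) 0) => a1; [by left|by rewrite a1 in U|right; split=> //].
move: U a_neq0; rewrite a1 eqxx ltxx /= rV2_eq0 a1 eqxx andbT => /negbT.
by rewrite -leNgt lt_neqAle => -> ->.
Qed.

Lemma arg_class_le2 a : (arg_class a <= 2)%N.
Proof. by rewrite /arg_class; case: ifP => //; case: ifP. Qed.

Lemma arg_le_refl : reflexive arg_le.
Proof. by move=> a; rewrite /arg_le eqxx crossvv lexx orbT. Qed.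

Lemma arg_le_total : total arg_le.
Proof.
move=> a b; rewrite /arg_le; case: (ltngtP (arg_class a) (arg_class b)) => //= _.
by rewrite [cross b a]crossC oppr_ge0 le_total.
Qed.

Lemma arg_le_class a b :
  arg_le a b -> (arg_class a <= arg_class b)%N /\ (arg_class a = arg_class b -> 0 <= cross a b).
Proof.
rewrite /arg_le => /orP[lt_ab|/andP[/eqP-> ->]] //.
by split=> [|E]; [exact: ltnW|by rewrite E ltnn in lt_ab].
Qed.

Lemma cross_neq0_class v a : cross v a != 0 -> (arg_class v < 2)%N /\ (arg_class a < 2)%N.
Proof.
have [_ _ V2] := arg_classP v; have [_ _ A2] := arg_classP a.
have := arg_class_le2 a; rewrite leq_eqVlt => /orP[/eqP/A2->|->].
  by rewrite cross0r eqxx.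
have := arg_class_le2 v; rewrite leq_eqVlt => /orP[/eqP/V2->|->] //.
by rewrite cross0l eqxx.
Qed.

Lemma cross_same_class_trans a b c : arg_class a = arg_class b -> arg_class b = arg_class c ->
  0 <= cross a b -> 0 <= cross b c -> 0 <= cross a c.
Proof.
move=> Eab Ebc ab bc; have [_ cyc] := cross_cyclic a b c.
have [A0 A1 A2] := arg_classP a; have [B0 B1 B2] := arg_classP b; have [C0 C1 C2] := arg_classP c.
move: Eab Ebc (arg_class_le2 b); case Eb: (arg_class b) => [|[|[|//]]] Eab Ebc _.
- have [a1|[a1 a0]] := A0 Eab; have [c1|[c1 c0]] := C0 (esym Ebc);
  have [b1|[b1 b0]] := B0 Eb; rewrite /cross in ab bc cyc *; nra.
- have [a1|[a1 a0]] := A1 Eab; have [c1|[c1 c0]] := C1 (esym Ebc);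
  have [b1|[b1 b0]] := B1 Eb; rewrite /cross in ab bc cyc *; nra.
- by rewrite (A2 Eab) cross0l.
Qed.

Lemma arg_le_trans : transitive arg_le.
Proof.
move=> b a c; rewrite /arg_le => /orP[ab|/andP[/eqP Eab ab]] /orP[bc|/andP[/eqP Ebc bc]].
- by rewrite (ltn_trans ab bc).
- by rewrite -Ebc ab.
- by rewrite Eab bc.
- by rewrite Eab Ebc eqxx (cross_same_class_trans Eab Ebc ab bc) orbT.
Qed.

(* Going counterclockwise from [v], [cross v _] is first nonnegative, then
   nonpositive; the three lemmas cover the three cyclic arrangements. *)
Lemma cross_sign_vab v a b :
  arg_le v a -> arg_le a b -> cross v a < 0 -> cross v b <= 0.
Proof.
move=> /arg_le_class[va va'] /arg_le_class[ab ab'] va_lt0.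
rewrite leNgt; apply/negP => vb_gt0.
have [_ Ca] := cross_neq0_class (ltr0_neq0 va_lt0).
have [_ Cb] := cross_neq0_class (lt0r_neq0 vb_gt0).
have Nva : arg_class v <> arg_class a by move=> E; have := va' E; rewrite leNgt va_lt0.
have Ga : arg_class a = 1%N by move: va Ca Nva; case: (arg_class a) => [|[|]] //; case: (arg_class v).
have Gv : arg_class v = 0%N by move: va Nva; rewrite Ga; case: (arg_class v) => [|[|]].
have Gb : arg_class b = 1%N by move: ab Cb; rewrite Ga; case: (arg_class b) => [|[|]].
have hab := ab' (etrans Ga (esym Gb)).
have [V0 _ _] := arg_classP v; have [_ A1 _] := arg_classP a; have [_ B1 _] := arg_classP b.
have [_ cyc] := cross_cyclic v a b.
have [v1|[v1 v0]] := V0 Gv; have [a1|[a1 a0]] := A1 Ga; have [b1|[b1 b0]] := B1 Gb;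
rewrite /cross in va_lt0 vb_gt0 hab cyc; nra.
Qed.

Lemma cross_sign_abv v a b :
  arg_le a b -> arg_le b v -> cross v a < 0 -> cross v b <= 0.
Proof.
move=> /arg_le_class[ab ab'] /arg_le_class[bv bv'] va_lt0.
rewrite leNgt; apply/negP => vb_gt0.
have [Cv Cb] := cross_neq0_class (lt0r_neq0 vb_gt0).
have Nbv : arg_class b <> arg_class v.
  by move=> E; have := bv' E; rewrite crossC oppr_ge0 leNgt vb_gt0.
have Gb : arg_class b = 0%N.
  by move: bv Cb Nbv Cv; case: (arg_class b) => [|[|]] //; case: (arg_class v) => [|[|]].
have Gv : arg_class v = 1%N by move: bv Nbv Cv; rewrite Gb; case: (arg_class v) => [|[|]].
have Ga : arg_class a = 0%N by move: ab; rewrite Gb; case: (arg_class a).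
have hab := ab' (etrans Ga (esym Gb)).
have [_ V1 _] := arg_classP v; have [A0 _ _] := arg_classP a; have [B0 _ _] := arg_classP b.
have [_ cyc] := cross_cyclic v a b.
have [v1|[v1 v0]] := V1 Gv; have [a1|[a1 a0]] := A0 Ga; have [b1|[b1 b0]] := B0 Gb;
rewrite /cross in va_lt0 vb_gt0 hab cyc; nra.
Qed.

Lemma cross_sign_bva v a b :
  arg_le b v -> arg_le v a -> cross v a < 0 -> cross v b <= 0.
Proof.
move=> /arg_le_class[bv bv'] /arg_le_class[va va'] va_lt0.
rewrite leNgt; apply/negP => vb_gt0.
have [_ Ca] := cross_neq0_class (ltr0_neq0 va_lt0).
have Nva : arg_class v <> arg_class a by move=> E; have := va' E; rewrite leNgt va_lt0.
have Nbv : arg_class b <> arg_class v.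
  by move=> E; have := bv' E; rewrite crossC oppr_ge0 leNgt vb_gt0.
lia.
Qed.

End AngularOrder.

Lemma pairwise_iota (r : rel nat) m k :
  (forall a b, (m <= a)%N -> (a < b < m + k)%N -> r a b) -> pairwise r (iota m k).
Proof.
elim: k m => [//|k IH] m r_lt /=; apply/andP; split.
  by apply/allP => b; rewrite mem_iota => /andP[mb bk]; apply: r_lt => //; lia.
by apply: IH => a b ma /andP[ab bk]; apply: r_lt; lia.
Qed.

Section PrefixSums.
Variable R : realDomainType.

Lemma prefix_sum_ge0 (s : seq R) :
    \sum_(x <- s) x = 0 -> pairwise (fun x y => (x < 0) ==> (y <= 0)) s ->
  forall k, 0 <= \sum_(x <- take k s) x.
Proof.
move=> sum0 sign k; rewrite leNgt; apply/negP => take_lt0.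
have [x xk x_lt0] : exists2 x, x \in take k s & x < 0.
  apply/hasP; apply: contraTT take_lt0 => /hasPn take_ge0.
  by rewrite -leNgt big_seq sumr_ge0 // => y /take_ge0; rewrite leNgt.
have drop_le0 : \sum_(y <- drop k s) y <= 0.
  rewrite big_seq sumr_le0 // => y yk.
  move: sign; rewrite -(cat_take_drop k s) pairwise_cat => /and3P[/allrelP sign _ _].
  by move/implyP: (sign x y xk yk); apply.
by move: sum0; rewrite -(cat_take_drop k s) big_cat /=; lra.
Qed.

End PrefixSums.

Section ConvexPolygon.
Variable R : realFieldType.
Variables (n : nat) (c : 'rV[R]_2) (d : nat -> 'rV[R]_2).

Definition pvtx k := c + \sum_(0 <= i < k) d i.

Definition pedge i (s : R) := pvtx i + s *: d i.

Definition on_ppolygon x := exists i s, (i < n)%N /\ 0 <= s <= 1 /\ x = pedge i s.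

Lemma pvtx0 : pvtx 0 = c.
Proof. by rewrite /pvtx big_geq // addr0. Qed.

Lemma pvtxS k : pvtx k.+1 = pvtx k + d k.
Proof. by rewrite /pvtx big_nat_recr //= addrA. Qed.

Lemma pvtxB j k : (j <= k)%N -> pvtx k - pvtx j = \sum_(j <= i < k) d i.
Proof.
elim: k => [|k IH]; first by rewrite leqn0 => /eqP->; rewrite subrr big_geq.
rewrite leq_eqVlt => /orP[/eqP<-|jk]; first by rewrite subrr big_geq.
by rewrite big_nat_recr //= -IH // pvtxS addrAC.
Qed.

Lemma pedge1 i : pedge i 1 = pvtx i.+1.
Proof. by rewrite /pedge scale1r pvtxS. Qed.

Lemma pvtxSB k : pvtx k.+1 - pvtx k = d k.
Proof. by rewrite pvtxS addrAC subrr add0r. Qed.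

Lemma pedgeB i s : pedge i s - pvtx i = s *: d i.
Proof. by rewrite /pedge addrAC subrr add0r. Qed.

Lemma last_nonzero_edge m : (exists j, (j < m)%N /\ d j != 0) ->
  exists j, [/\ (j < m)%N, d j != 0 & pvtx j.+1 = pvtx m].
Proof.
elim: m => [[j []]//|m IH [j [jm dj]]].
case: (eqVneq (d m) 0) => [dm0|]; last by exists m.
have [|i [im di Ei]] := IH.
  exists j; split=> //; move: jm; rewrite ltnS leq_eqVlt => /orP[/eqP jm|//].
  by rewrite jm dm0 eqxx in dj.
by exists i; split; [exact: ltnW|by []|rewrite Ei pvtxS dm0 addr0].
Qed.

Lemma cross_ray v o p x y (l : R) : x - p = l *: (y - p) ->
  cross v (x - o) = (1 - l) * cross v (p - o) + l * cross v (y - o).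
Proof.
move=> E; have -> : x - o = (x - p) + (p - o) by rewrite addrA subrK.
by rewrite E crossDr crossZr !crossBr; ring.
Qed.

Lemma collinear_star e : e != 0 -> (forall k, (k < n)%N -> cross e (d k) = 0) ->
  exists p, star_center on_ppolygon p.
Proof.
move=> e_neq0 par.
have on_line x : on_ppolygon x -> cross e (x - c) = 0.
  move=> [i [s [i_lt_n [_ ->]]]].
  rewrite -(subrK (pvtx i) (pedge i s)) -addrA crossDr pedgeB crossZr par // mulr0 add0r.
  rewrite -pvtx0 pvtxB // cross_sumr big_nat big1 // => l /andP[_ li].
  by apply: par; apply: ltn_trans i_lt_n.
pose p := c + \row_(k < 2) (if k == 0 then - e 0 1 else e 0 0).
have cross_p : 0 < cross e (p - c).
  have sqr_gt0 (a : R) : a != 0 -> 0 < a * a by move=> a0; rewrite -expr2 lt0r sqrf_eq0 a0 sqr_ge0.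
  rewrite /p addrAC subrr add0r /cross !mxE /=.
  by move: e_neq0; rewrite rV2_eq0 negb_and => /orP[/sqr_gt0|/sqr_gt0]; nra.
exists p; apply: star_center_lt1 => [/on_line|x y l /on_line Cx /on_line Cy /andP[l0 l1] ray].
  by move/eqP; rewrite gt_eqF.
have := cross_ray e c ray; rewrite Cx Cy mulr0 addr0 => /esym/eqP.
by rewrite mulf_eq0 subr_eq0 (gt_eqF cross_p) orbF => /eqP l1'; rewrite -l1' ltxx in l1.
Qed.

Hypothesis d_closed : \sum_(0 <= i < n) d i = 0.
Hypothesis d_sorted : forall i j, (i <= j < n)%N -> arg_le (d i) (d j).

Lemma pvtxn : pvtx n = pvtx 0.
Proof. by rewrite /pvtx d_closed big_geq. Qed.

(* Convexity: along the edges in cyclic order from [d j], the signs of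
   [cross (d j) _] form a nonnegative block followed by a nonpositive one,
   so every partial sum from [j] is nonnegative. *)
Lemma cross_pvtx_ge0 j k : (j < n)%N -> (k <= n)%N -> 0 <= cross (d j) (pvtx k - pvtx j).
Proof.
move=> jn kn; pose F i := cross (d j) (d i).
have Fsum a m : \sum_(i <- iota a m) F i = cross (d j) (pvtx (a + m) - pvtx a).
  by rewrite pvtxB ?leq_addr // cross_sumr /index_iota addKn.
pose s := [seq F i | i <- iota j (n - j) ++ iota 0 j].
have sum_s : \sum_(x <- s) x = 0.
  rewrite big_map big_cat /= !Fsum subnKC ?(ltnW jn) // add0n -crossDr addrC pvtxn.
  by rewrite addrA subrK subrr cross0r.
have sign_s : pairwise (fun x y => (x < 0) ==> (y <= 0)) s.
  rewrite pairwise_map pairwise_cat; apply/and3P; split.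
  - apply/allrelP => a b; rewrite !mem_iota /= add0n subnKC ?(ltnW jn) // => /andP[ja an] bj.
    by apply/implyP; apply: cross_sign_bva; apply: d_sorted; lia.
  - apply: pairwise_iota => a b ja ab; rewrite subnKC ?(ltnW jn) // in ab.
    by apply/implyP; apply: cross_sign_vab; apply: d_sorted; lia.
  - apply: pairwise_iota => a b _ ab; rewrite add0n in ab.
    by apply/implyP; apply: cross_sign_abv; apply: d_sorted; lia.
case: (leqP j k) => [jk|kj].
- have := prefix_sum_ge0 sum_s sign_s (k - j).
  rewrite -map_take takel_cat ?size_iota ?leq_sub2r // take_iota.
  by rewrite (minn_idPl (leq_sub2r j kn)) big_map Fsum subnKC.
- have := prefix_sum_ge0 sum_s sign_s (n - j + k).
  rewrite -map_take take_cat size_iota ltnNge leq_addr /= addKn take_iota (minn_idPl (ltnW kj)).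
  rewrite big_map big_cat /= !Fsum subnKC ?(ltnW jn) // add0n -crossDr pvtxn.
  by rewrite addrC addrA subrK.
Qed.

Lemma cross_on_ppolygon_ge0 j x : (j < n)%N -> on_ppolygon x -> 0 <= cross (d j) (x - pvtx j).
Proof.
move=> jn [k [t [kn [/andP[t0 t1] ->]]]].
have ray : pedge k t - pvtx k = t *: (pvtx k.+1 - pvtx k) by rewrite pedgeB pvtxSB.
rewrite (cross_ray _ _ ray).
have A := cross_pvtx_ge0 jn (ltnW kn); have B := cross_pvtx_ge0 jn kn.
by apply: addr_ge0; apply: mulr_ge0; rewrite // subr_ge0.
Qed.

Definition centroid := n%:R^-1 *: \sum_(0 <= k < n) pvtx k.

Lemma centroid_cross j : (0 < n)%N ->
  cross (d j) (centroid - pvtx j) = n%:R^-1 * \sum_(0 <= k < n) cross (d j) (pvtx k - pvtx j).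
Proof.
move=> n_gt0; rewrite -cross_sumr sumrB sumr_const_nat subn0 -scaler_nat /centroid.
rewrite !crossBr !crossZr; field; by rewrite pnatr_eq0 -lt0n.
Qed.

Section NonCollinear.
Hypothesis d_noncollinear : exists a b, [/\ (a < n)%N, (b < n)%N & cross (d a) (d b) != 0].

Lemma exists_nonzero_edge : exists j, (j < n)%N /\ d j != 0.
Proof.
have [a [b [an _ ab]]] := d_noncollinear; exists a; split=> //.
by apply: contraNneq ab => ->; rewrite cross0l.
Qed.

Lemma centroid_left j : (j < n)%N -> d j != 0 -> 0 < cross (d j) (centroid - pvtx j).
Proof.
move=> jn dj; have n_gt0 : (0 < n)%N by apply: leq_ltn_trans jn.
have ge0 (k : 'I_n) : true -> 0 <= cross (d j) (pvtx k - pvtx j).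
  by move=> _; apply: cross_pvtx_ge0 => //; apply: ltnW.
rewrite centroid_cross // pmulr_rgt0 ?invr_gt0 ?ltr0n // big_mkord lt_def (sumr_ge0 _ ge0) andbT.
apply/negP => /eqP/(psumr_eq0P ge0) zero.
have {}zero k : (k <= n)%N -> cross (d j) (pvtx k - pvtx j) = 0.
  rewrite leq_eqVlt => /orP[/eqP->|kn]; last exact: (zero (Ordinal kn)).
  by rewrite pvtxn; apply: (zero (Ordinal n_gt0)).
have par l : (l < n)%N -> cross (d j) (d l) = 0.
  by move=> ln; have := zero l.+1 ln; rewrite pvtxS addrAC crossDr zero ?add0r // ltnW.
have [a [b [an bn]]] := d_noncollinear.
by rewrite (cross_parallel dj (par a an) (par b bn)) eqxx.
Qed.

Lemma nonzero_pedge i s : (i < n)%N -> 0 <= s <= 1 ->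
  exists i' s', [/\ (i' < n)%N, 0 <= s' <= 1, d i' != 0 & pedge i' s' = pedge i s].
Proof.
move=> i_lt_n s01; case: (eqVneq (d i) 0) => [di0|]; last by exists i, s.
have -> : pedge i s = pvtx i by rewrite /pedge di0 scaler0 addr0.
suff [j [jn dj <-]] : exists j, [/\ (j < n)%N, d j != 0 & pvtx j.+1 = pvtx i].
  by exists j, 1; rewrite pedge1 ler01 lexx.
case: (boolP [exists j : 'I_i, d j != 0]) => [/existsP[j dj]|/existsPn none].
  have [k [ki dk Ek]] := last_nonzero_edge (ex_intro _ _ (conj (ltn_ord j) dj)).
  by exists k; split=> //; apply: ltn_trans i_lt_n.
have [k [kn dk Ek]] := last_nonzero_edge exists_nonzero_edge.
exists k; split=> //; apply/esym/eqP; rewrite Ek pvtxn -subr_eq0 pvtxB // big_nat big1 //.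
by move=> l /andP[_ li]; apply/eqP; move: (none (Ordinal li)); rewrite negbK.
Qed.

Lemma centroid_star : star_center on_ppolygon centroid.
Proof.
have normal x : on_ppolygon x -> exists i s, [/\ (i < n)%N, d i != 0 & x - pvtx i = s *: d i].
  move=> [i [s [i_lt_n [s01 ->]]]]; have [i' [s' [i'n _ di' <-]]] := nonzero_pedge i_lt_n s01.
  by exists i', s'; rewrite pedgeB.
apply: star_center_lt1 => [/normal[i [s [i_lt_n di E]]]|x y l /normal[i [s [i_lt_n di E]]] Cy].
  by have := centroid_left i_lt_n di; rewrite E crossZr crossvv mulr0 ltxx.
move=> /andP[l_gt0 l_lt1] ray; have := cross_ray (d i) (pvtx i) ray.
rewrite E crossZr crossvv mulr0.
have := centroid_left i_lt_n di; have := cross_on_ppolygon_ge0 i_lt_n Cy.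
nra.
Qed.

End NonCollinear.

Theorem convex_polygon_star : exists p, star_center on_ppolygon p.
Proof.
case: (boolP [exists a : 'I_n, exists b : 'I_n, cross (d a) (d b) != 0]).
  move=> /existsP[a /existsP[b ab]]; exists centroid; apply: centroid_star.
  by exists a, b; split.
move=> /existsPn par.
have [e [e0 e_par]] : exists e, e != 0 /\ forall k, (k < n)%N -> cross e (d k) = 0.
  case: (boolP [exists j : 'I_n, d j != 0]) => [/existsP[j dj]|/existsPn zero].
    exists (d j); split=> // k kn.
    by move: (par j) => /existsPn/(_ (Ordinal kn)); rewrite negbK => /eqP.
  exists (const_mx 1); split; first by rewrite rV2_eq0 !mxE oner_eq0.
  by move=> k kn; move: (zero (Ordinal kn)); rewrite negbK => /eqP->; rewrite cross0r.
exact: collinear_star e0 e_par.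
Qed.

End ConvexPolygon.

Section PolygonalCurves.
Variable R : realType.
Implicit Types L : seq 'rV[R]_3.

Lemma vtx_mod L i : vtx L (i %% size L) = vtx L i.
Proof. by rewrite /vtx modn_mod. Qed.

Lemma vtx_small L i : (i < size L)%N -> vtx L i = nth 0 L i.
Proof. by move=> iL; rewrite /vtx modn_small. Qed.

Lemma on_edge_mod L i s : on_edge L (i %% size L) s = on_edge L i s.
Proof.
rewrite /on_edge vtx_mod; congr (_ + _ *: (_ - _)).
by rewrite /vtx -[(i %% size L).+1]addn1 modnDml addn1.
Qed.

Lemma on_edge0 L i : on_edge L i 0 = vtx L i.
Proof. by rewrite /on_edge scale0r addr0. Qed.

Lemma on_edge1 L i : on_edge L i 1 = vtx L i.+1.
Proof. by rewrite /on_edge scale1r addrC subrK. Qed.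

Lemma on_edge1_mod L i : on_edge L i 1 = on_edge L (i.+1 %% size L) 0.
Proof. by rewrite on_edge1 on_edge0 vtx_mod. Qed.

Lemma on_edge_on_curve L i s : (i < size L)%N -> 0 <= s <= 1 -> on_curve L (on_edge L i s).
Proof. by move=> iL s01; exists i, s. Qed.

Lemma vtx_on_curve L i : (0 < size L)%N -> on_curve L (vtx L i).
Proof.
move=> L_gt0; rewrite -vtx_mod -on_edge0.
by apply: on_edge_on_curve; rewrite ?ltn_mod // lexx ler01.
Qed.

Lemma simple_polygon_size L : simple_polygon L -> (1 < size L)%N.
Proof.
case=> L_gt0 inj; rewrite ltnNge; apply/negP => L_le1.
have L1 : size L = 1%N by apply/eqP; rewrite eqn_leq L_le1.
have vtx0 i : vtx L i = vtx L 0 by rewrite /vtx L1 !modn1.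
have E : on_edge L 0 0 = on_edge L 0 (1/2) by rewrite /on_edge !vtx0 !subrr !scaler0.
have h0 : 0 <= (0 : R) < 1 by rewrite lexx ltr01.
have h12 : 0 <= (1 / 2 : R) < 1 by apply/andP; split; lra.
by have [_] := inj 0%N 0%N 0 (1/2) L_gt0 L_gt0 h0 h12 E; lra.
Qed.

Lemma nth_rot L k i : (k <= size L)%N -> (i < size L)%N ->
  nth 0 (rot k L) i = nth 0 L ((i + k) %% size L).
Proof.
move=> kL iL; rewrite /rot nth_cat size_drop.
move: (size L) kL iL => N kL iL; case: ltnP => ik.
  by rewrite nth_drop addnC modn_small //; lia.
have -> : (i + k = (i - (N - k)) + N)%N by lia.
by rewrite nth_take ?modnDr ?modn_small //; lia.
Qed.

Lemma vtx_rot L k i : (k <= size L)%N -> vtx (rot k L) i = vtx L (i + k).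
Proof.
move=> kL; case: (posnP (size L)) => [/eqP|L_gt0].
  by rewrite size_eq0 => /eqP->; rewrite /vtx /rot /= !nth_nil.
by rewrite /vtx size_rot nth_rot ?ltn_mod // modnDml.
Qed.

Lemma on_edge_rot L k i s : (k <= size L)%N -> on_edge (rot k L) i s = on_edge L (i + k) s.
Proof. by move=> kL; rewrite /on_edge !vtx_rot // addSn. Qed.

Lemma simple_rot L k : (k <= size L)%N -> simple_polygon L -> simple_polygon (rot k L).
Proof.
move=> kL [L_gt0 inj]; split; first by rewrite size_rot.
move=> i j s t; rewrite size_rot => iL jL s01 t01; rewrite !on_edge_rot // => E.
have := inj ((i + k) %% size L)%N ((j + k) %% size L)%N s t.
rewrite !ltn_mod L_gt0 !on_edge_mod => /(_ isT isT s01 t01 E) [ij ->]; split=> //.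
by move/eqP: ij; rewrite eqn_modDr !modn_small // => /eqP.
Qed.

Lemma lt1_le1 (s : R) : 0 <= s < 1 -> 0 <= s <= 1.
Proof. by case/andP=> -> /ltW. Qed.

Lemma segment_flip (a b : 'rV[R]_3) (t : R) : a + t *: (b - a) = b + (1 - t) *: (a - b).
Proof. by apply/rowP => i; rewrite !mxE; ring. Qed.

Lemma in_triangle_rot (a b c x : 'rV[R]_3) : in_triangle a b c x -> in_triangle b c a x.
Proof.
move=> [l1 [l2 [l3 [l1_ge0 [l2_ge0 [l3_ge0 [sum1 ->]]]]]]].
exists l2, l3, l1; do 3!split=> //; split; first lra.
by rewrite [RHS]addrC addrA.
Qed.

Lemma in_triangle_apex (a b c x : 'rV[R]_3) : in_triangle a b c x ->
  x = c \/ exists l r, [/\ 0 < l, 0 <= r <= 1 & x - c = l *: (a + r *: (b - a) - c)].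
Proof.
move=> [l1 [l2 [l3 [l1_ge0 [l2_ge0 [l3_ge0 [sum1 ->]]]]]]].
have [l12|l12] := eqVneq (l1 + l2) 0.
  left; have [-> ->] : l1 = 0 /\ l2 = 0 by lra.
  by rewrite (_ : l3 = 1) ?scale0r ?add0r ?scale1r //; lra.
have l12_gt0 : 0 < l1 + l2 by rewrite lt_def l12; lra.
right; exists (l1 + l2), (l2 / (l1 + l2)); split=> //.
  by rewrite divr_ge0 ?ler_pdivrMr // ?mul1r; lra.
have -> : l3 = 1 - l1 - l2 by lra.
by apply/rowP => i; rewrite !mxE; field; rewrite gt_eqF.
Qed.

End PolygonalCurves.

Section Cone.
Variable R : realType.
Variables (P : seq 'rV[R]_3) (O : 'rV[R]_3).
Hypotheses (P_simple : simple_polygon P) (O_star : star_center (on_curve P) O).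
Local Notation m := (size P).

Lemma size_gt1 : (1 < m)%N.
Proof. exact: simple_polygon_size. Qed.

Lemma vtx_on_P i : on_curve P (vtx P i).
Proof. by apply: vtx_on_curve; apply: ltnW size_gt1. Qed.

Lemma on_P_neqO q : on_curve P q -> q - O != 0.
Proof. by rewrite subr_eq0 => Pq; apply/eqP => qO; case: O_star; rewrite -qO. Qed.

Lemma P_inj i j s t : (i < m)%N -> (j < m)%N -> 0 <= s < 1 -> 0 <= t < 1 ->
  on_edge P i s = on_edge P j t -> i = j /\ s = t.
Proof. by case: P_simple => _; apply. Qed.

Lemma vtx_inj i j : (i < m)%N -> (j < m)%N -> vtx P i = vtx P j -> i = j.
Proof.
move=> im jm E; have h0 : 0 <= (0 : R) < 1 by rewrite lexx ltr01.
by have [] := P_inj im jm h0 h0 (_ : on_edge P i 0 = on_edge P j 0); rewrite ?on_edge0.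
Qed.

Lemma cone_segment_end q (s : R) :
  on_curve P q -> 0 <= s -> on_curve P (O + s *: (q - O)) -> s = 1.
Proof.
move=> Pq s_ge0 Pz; have [s0|s_neq0] := eqVneq s 0.
  by case: O_star => + _; move: Pz; rewrite s0 scale0r addr0.
have ray : O + s *: (q - O) - O = s *: (q - O) by apply/rowP => i; rewrite !mxE; ring.
have s_gt0 : 0 < s by rewrite lt_def s_neq0.
have /rowP zq := O_star.2 _ _ _ Pz Pq s_gt0 ray.
have : (1 - s) *: (q - O) = 0.
  by apply/rowP => i; have := zq i; rewrite !mxE => zqi; nra.
by move/eqP; rewrite scaler_eq0 (negbTE (on_P_neqO Pq)) orbF subr_eq0 => /eqP<-.
Qed.

Lemma cone_rays_inj q1 q2 (s1 s2 : R) : on_curve P q1 -> on_curve P q2 -> 0 < s1 -> 0 < s2 ->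
  O + s1 *: (q1 - O) = O + s2 *: (q2 - O) -> q1 = q2.
Proof.
move=> P1 P2 s1_gt0 s2_gt0 /addrI E.
have ray : q1 - O = (s2 / s1) *: (q2 - O).
  apply: (scalerI (lt0r_neq0 s1_gt0)).
  by rewrite E scalerA mulrCA mulfV ?mulr1 // lt0r_neq0.
exact: O_star.2 P1 P2 (divr_gt0 s2_gt0 s1_gt0) ray.
Qed.

(* [P] with its first [k+1] edges coned off from [O]. *)
Definition cone k := O :: drop k.+1 P ++ [:: vtx P 0].

Section ConeK.
Variable k : nat.
Hypothesis km : (k.+2 <= m)%N.

Lemma size_cone : size (cone k) = (m - k).+1.
Proof. by rewrite /= size_cat size_drop addn1; congr _.+1; lia. Qed.

Lemma vtx_cone i : (0 < i <= m - k)%N -> vtx (cone k) i = vtx P (k + i).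
Proof.
case: i => [//|i] /andP[_ im]; rewrite vtx_small ?size_cone //= nth_cat size_drop.
case: ltnP => ik; first by rewrite nth_drop /vtx modn_small ?addSnnS //; lia.
have -> : i = (m - k.+1)%N by lia.
rewrite subnn /= (_ : k + _ = m)%N; last lia.
by rewrite -(vtx_mod P m) modnn.
Qed.

Lemma vtx_cone0 : vtx (cone k) 0 = O.
Proof. by rewrite /vtx mod0n. Qed.

Lemma on_edge_cone_first s : on_edge (cone k) 0 s = O + s *: (vtx P k.+1 - O).
Proof. by rewrite /on_edge vtx_cone0 vtx_cone ?addn1 //; lia. Qed.

Lemma on_edge_cone_mid i s : (0 < i < m - k)%N -> on_edge (cone k) i s = on_edge P (k + i) s.
Proof. by move=> ik; rewrite /on_edge !vtx_cone ?addnS //; lia. Qed.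

Lemma on_edge_cone_last s :
  on_edge (cone k) (m - k) s = O + (1 - s) *: (vtx P 0 - O).
Proof.
rewrite /on_edge (_ : vtx (cone k) (m - k).+1 = O); last by rewrite /vtx size_cone modnn.
rewrite vtx_cone ?subnKC; try lia.
by rewrite -(vtx_mod P m) modnn segment_flip.
Qed.

Lemma on_cone x : on_curve (cone k) x ->
  [\/ exists2 s, 0 <= s <= 1 & x = O + s *: (vtx P k.+1 - O),
      exists j s, [/\ (k < j < m)%N, 0 <= s <= 1 & x = on_edge P j s] |
      exists2 s, 0 <= s <= 1 & x = O + (1 - s) *: (vtx P 0 - O)].
Proof.
move=> [i [s [iS [s01 ->]]]]; rewrite size_cone ltnS in iS.
case: (posnP i) => [->|i_gt0]; first by apply: Or31; exists s; rewrite ?on_edge_cone_first.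
case: (ltnP i (m - k)) => [im|mi].
  by apply: Or32; exists (k + i)%N, s; rewrite on_edge_cone_mid ?i_gt0 //; split=> //; lia.
have -> : i = (m - k)%N by apply/eqP; rewrite eqn_leq iS mi.
by apply: Or33; exists s; rewrite ?on_edge_cone_last.
Qed.

Lemma ray_param_inj q s t : on_curve P q -> O + s *: (q - O) = O + t *: (q - O) -> s = t.
Proof.
move=> Pq /addrI/eqP; rewrite -subr_eq0 -scalerBl scaler_eq0 (negbTE (on_P_neqO Pq)) orbF.
by rewrite subr_eq0 => /eqP.
Qed.

Lemma cone_first_mid s j t : 0 <= s < 1 -> (k < j < m)%N -> 0 <= t <= 1 ->
  O + s *: (vtx P k.+1 - O) = on_edge P j t -> False.
Proof.
move=> /andP[s_ge0 s_lt1] /andP[_ jm] t01 E.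
have := cone_segment_end (vtx_on_P k.+1) s_ge0; rewrite E => /(_ (on_edge_on_curve jm t01)).
by move=> s1; rewrite s1 ltxx in s_lt1.
Qed.

Lemma cone_first_last s t : 0 <= s < 1 -> 0 <= t < 1 ->
  O + s *: (vtx P k.+1 - O) = O + (1 - t) *: (vtx P 0 - O) -> False.
Proof.
move=> /andP[s_ge0 s_lt1] /andP[t_ge0 t_lt1] E; have [s0|s_neq0] := eqVneq s 0.
  move: E => /addrI/esym/eqP; rewrite s0 scale0r scaler_eq0 (negbTE (on_P_neqO (vtx_on_P 0))).
  by rewrite orbF subr_eq0 => /eqP t1; rewrite -t1 ltxx in t_lt1.
have s_gt0 : 0 < s by rewrite lt_def s_neq0.
have t'_gt0 : 0 < 1 - t by rewrite subr_gt0.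
have := cone_rays_inj (vtx_on_P _) (vtx_on_P _) s_gt0 t'_gt0 E.
by move/(vtx_inj km (ltn_trans (ltn0Sn k) km)).
Qed.

Lemma cone_mid_last j s t : (k < j < m)%N -> 0 <= s < 1 -> 0 <= t < 1 ->
  on_edge P j s = O + (1 - t) *: (vtx P 0 - O) -> False.
Proof.
move=> /andP[kj jm] s01 /andP[t_ge0 t_lt1] E.
have t'_ge0 : 0 <= 1 - t by rewrite subr_ge0 ltW.
have := cone_segment_end (vtx_on_P 0) t'_ge0; rewrite -E.
move=> /(_ (on_edge_on_curve jm (lt1_le1 s01))) t1.
have p0E : on_edge P j s = on_edge P 0 0.
  by rewrite E on_edge0 (_ : t = 0); [apply/rowP => i; rewrite !mxE; ring | lra].
have h0 : 0 <= (0 : R) < 1 by rewrite lexx ltr01.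
by have [j0 _] := P_inj jm (ltn_trans (ltn0Sn k) km) s01 h0 p0E; rewrite j0 in kj.
Qed.

Lemma cone_simple : simple_polygon (cone k).
Proof.
split; first by rewrite size_cone.
have cls i : (i < size (cone k))%N -> [\/ i = 0%N, (0 < i < m - k)%N | i = (m - k)%N].
  rewrite size_cone ltnS => im; case: (posnP i) => [->|i_gt0]; first exact: Or31.
  case: (ltnP i (m - k)) => [ik|ki]; first by apply: Or32; apply/andP.
  by apply: Or33; apply/eqP; rewrite eqn_leq im ki.
have mid i : (0 < i < m - k)%N -> (k < k + i < m)%N by lia.
move=> i j s t iS jS s01 t01.
case: (cls i iS) => [->|iM|->]; case: (cls j jS) => [->|jM|->];
  rewrite ?on_edge_cone_first ?on_edge_cone_last ?(on_edge_cone_mid _ iM) ?(on_edge_cone_mid _ jM).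
- by move/(ray_param_inj (vtx_on_P _)).
- by move/(cone_first_mid s01 (mid _ jM) (lt1_le1 t01)).
- by move/(cone_first_last s01 t01).
- by move/esym/(cone_first_mid t01 (mid _ iM) (lt1_le1 s01)).
- move=> E; have [ij ->] := P_inj (proj2 (andP (mid _ iM))) (proj2 (andP (mid _ jM))) s01 t01 E.
  by split=> //; apply/eqP; rewrite -(eqn_add2l k) ij.
- by move/(cone_mid_last (mid _ iM) s01 t01).
- by move/esym/(cone_first_last t01 s01).
- by move/esym/(cone_mid_last (mid _ jM) t01 s01).
- by move/(ray_param_inj (vtx_on_P 0)) => st; split=> //; lra.
Qed.

End ConeK.

Lemma on_edge_later_end i j s t : (0 < i < j)%N -> (j < m)%N -> 0 <= s <= 1 -> 0 <= t <= 1 ->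
  on_edge P j s = on_edge P i t -> t = 1.
Proof.
move=> /andP[i_gt0 ij] jm /andP[s_ge0 s_le1] /andP[t_ge0 t_le1] E.
case: (ltrP t 1) => [t_lt1|]; last by move=> t1; apply/eqP; rewrite eq_le t_le1.
have t01 : 0 <= t < 1 by rewrite t_ge0.
have im : (i < m)%N := ltn_trans ij jm.
case: (ltrP s 1) => [s_lt1|s1].
  have s01 : 0 <= s < 1 by rewrite s_ge0.
  by have [ji _] := P_inj jm im s01 t01 E; rewrite ji ltnn in ij.
have h0 : 0 <= (0 : R) < 1 by rewrite lexx ltr01.
move: E; rewrite (_ : s = 1) ?on_edge1_mod; last by apply/eqP; rewrite eq_le s_le1.
move=> /(P_inj (ltn_pmod _ (leq_ltn_trans (leq0n i) im)) im h0 t01) [ji _]; exfalso; move: ji.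
case: (ltngtP j.+1 m) => [jm'|mj|->].
- by rewrite modn_small // => ji; rewrite -ji ltnNge leqnSn in ij.
- by move: mj; rewrite ltnS leqNgt jm.
- by rewrite modnn => i0; rewrite -i0 in i_gt0.
Qed.

Lemma vtx_size : vtx P m = vtx P 0.
Proof. by rewrite -(vtx_mod P m) modnn. Qed.

Lemma cone_ray_hit k x l r : (k.+3 <= m)%N -> on_curve (cone k.+1) x -> 0 < l -> 0 <= r <= 1 ->
  x - O = l *: (on_edge P k.+1 r - O) -> in_segment O (vtx P k.+2) x.
Proof.
move=> km Cx l_gt0 r01 ray; have k1m : (k.+1 < m)%N := ltnW km.
have Py := on_edge_on_curve k1m r01.
have y_end j s : (k.+1 < j < m)%N -> 0 <= s <= 1 -> on_edge P j s = on_edge P k.+1 r -> r = 1.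
  by move=> /andP[kj jm] s01; apply: (on_edge_later_end _ jm s01 r01); rewrite kj.
case: (on_cone km Cx) => [[s s01 ->]|[j [s [kj s01 Ex]]]|[s s01 Ex]]; first by exists s.
  have Px : on_curve P x by rewrite Ex; apply: on_edge_on_curve; case/andP: kj.
  have xy := O_star.2 _ _ _ Px Py l_gt0 ray.
  have r1 := y_end j s kj s01 (etrans (esym Ex) xy).
  exists 1; rewrite lexx ler01 xy r1 on_edge1; split=> //.
  by apply/rowP => i; rewrite !mxE; ring.
have [s1|s_neq1] := eqVneq s 1.
  by exists 0; rewrite lexx ler01 Ex s1; split=> //; apply/rowP => i; rewrite !mxE; ring.
have s'_gt0 : 0 < 1 - s by rewrite subr_gt0 lt_neqAle s_neq1; case/andP: s01.
have E : O + (1 - s) *: (vtx P 0 - O) = O + l *: (on_edge P k.+1 r - O).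
  by rewrite -Ex; apply/rowP => i; move/rowP/(_ i): ray; rewrite !mxE; lra.
have p0y := cone_rays_inj (vtx_on_P 0) Py s'_gt0 l_gt0 E.
have m1 : (k.+1 < m.-1 < m)%N by rewrite prednK ?leqnn ?andbT; lia.
have p0E : on_edge P m.-1 1 = on_edge P k.+1 r by rewrite on_edge1 prednK ?vtx_size //; lia.
have := vtx_inj (ltn_trans (ltn0Sn _) km) km.
by rewrite p0y (y_end _ _ m1 _ p0E) ?on_edge1 ?lexx ?ler01 // => /(_ erefl).
Qed.

Lemma delta_cone k : (k.+3 <= m)%N -> delta_move (cone k.+1) (cone k).
Proof.
move=> km; have k1m : (k.+1 < m)%N := ltnW km.
exists O, (vtx P k.+2), (vtx P k.+1), (drop k.+3 P ++ [:: vtx P 0]); split; [|split].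
- by rewrite /cone (drop_nth 0 km) (vtx_small km).
- by rewrite /cone (drop_nth 0 k1m) (drop_nth 0 km) (vtx_small km) (vtx_small k1m).
move=> x /in_triangle_rot/in_triangle_apex[->|[l [r [l_gt0 r01 ray]]]] Cx.
  by exists 0; rewrite lexx ler01; split=> //; apply/rowP => i; rewrite !mxE; ring.
rewrite segment_flip -/(on_edge P k.+1 (1 - r)) in ray.
apply: cone_ray_hit km Cx l_gt0 _ ray.
by case/andP: r01 => ? ?; apply/andP; split; lra.
Qed.

Definition apex_inserted := vtx P 0 :: O :: behead P.

Lemma delta_apex_inserted : delta_move P apex_inserted.
Proof.
have P_eq : P = vtx P 0 :: vtx P 1 :: drop 2 P.
  rewrite (vtx_small (ltnW size_gt1)) (vtx_small size_gt1) -(drop_nth 0 size_gt1).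
  by rewrite -(drop_nth 0 (ltnW size_gt1)) drop0.
exists (vtx P 0), (vtx P 1), O, (drop 2 P); split; first exact: P_eq.
split; first by rewrite /apex_inserted -drop1 (drop_nth 0 size_gt1) (vtx_small size_gt1).
move=> x /in_triangle_apex[->|[l [r [l_gt0 r01 ray]]]] Cx; first by case: O_star.
rewrite -/(on_edge P 0 r) in ray.
have Py := on_edge_on_curve (ltnW size_gt1) r01.
by exists r; split=> //; rewrite (O_star.2 _ _ _ Cx Py l_gt0 ray).
Qed.

Lemma rot_apex_inserted : rot 1 apex_inserted = cone 0.
Proof. by rewrite /apex_inserted /cone rot1_cons -cats1 drop1. Qed.

Lemma simple_apex_inserted : simple_polygon apex_inserted.
Proof.
rewrite -(rotK 1 apex_inserted) rot_apex_inserted /rotr.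
by apply: simple_rot; [rewrite leq_subr|apply: cone_simple; apply: size_gt1].
Qed.

Lemma equiv_cone k : (k.+2 <= m)%N -> clos_refl_sym_trans _ (@poly_step R) P (cone k).
Proof.
elim: k => [_|k IH km].
  apply: (rst_trans _ _ _ apex_inserted); apply: rst_step.
    by split; [|split; [exact: simple_apex_inserted|right; left; exact: delta_apex_inserted]].
  split; [exact: simple_apex_inserted|split; [exact: cone_simple size_gt1|]].
  by left; exists 1%N; rewrite rot_apex_inserted.
apply: (rst_trans _ _ _ (cone k) _ (IH (ltnW km))); apply: rst_step.
split; [exact: cone_simple (ltnW km)|split; [exact: cone_simple km|]].
by right; right; apply: delta_cone.
Qed.

Theorem star_unknot : is_unknot P.
Proof.
have m2 := size_gt1; exists (cone (m - 2)); split; [|split].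
- by rewrite size_cone; lia.
- by apply: cone_simple; lia.
- by apply: equiv_cone; lia.
Qed.

End Cone.

Lemma sorting_perm (T : Type) (n : nat) (f : 'I_n -> T) (r : rel T) :
    total r -> transitive r -> reflexive r ->
  exists sigma : 'S_n, forall i j : 'I_n, (i <= j)%N -> r (f (sigma i)) (f (sigma j)).
Proof.
case: n f => [|n] f r_total r_trans r_refl; first by exists 1%g => -[].
pose leI i j := r (f i) (f j); pose s := sort leI (enum 'I_n.+1).
have s_sorted : sorted leI s by apply: sort_sorted => i j; apply: r_total.
have s_size : size s = n.+1 by rewrite size_sort size_enum_ord.
have nth_inj : injective (fun i : 'I_n.+1 => nth ord0 s i).
  move=> i j /eqP; rewrite nth_uniq ?s_size ?sort_uniq ?enum_uniq // => /eqP; exact: val_inj.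
exists (perm nth_inj) => i j ij; rewrite !permE.
have leI_trans : transitive leI by move=> b a d; apply: r_trans.
have leI_refl : reflexive leI by move=> a; apply: r_refl.
by apply: (sorted_leq_nth leI_trans leI_refl ord0 s_sorted); rewrite ?inE ?s_size.
Qed.

Section Projection.
Variable R : realType.

Lemma proj_xyD (a b : 'rV[R]_3) : proj_xy (a + b) = proj_xy a + proj_xy b.
Proof. by apply/rowP => i; rewrite !mxE. Qed.

Lemma proj_xyB (a b : 'rV[R]_3) : proj_xy (a - b) = proj_xy a - proj_xy b.
Proof. by apply/rowP => i; rewrite !mxE. Qed.

Lemma proj_xyZ (l : R) (a : 'rV[R]_3) : proj_xy (l *: a) = l *: proj_xy a.
Proof. by apply/rowP => i; rewrite !mxE. Qed.

Definition lift_xy (p : 'rV[R]_2) : 'rV[R]_3 :=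
  \row_(i < 3) (if (i < 2)%N then p 0 (inord i) else 0).

Lemma proj_lift_xy p : proj_xy (lift_xy p) = p.
Proof. by apply/rowP => i; rewrite !mxE /= ltn_ord inord_val. Qed.

End Projection.

Section Realization.
Variable R : realType.
Variables (n : nat) (u : 'I_n -> 'rV[R]_2) (sigma : 'S_n) (c : 'rV[R]_2) (h : 'I_n -> R).
Hypothesis u_closed : \sum_(k < n) u k = 0.
Local Notation L := (realization u sigma c h).

Definition realization_edge k := nth 0 [seq u (sigma i) | i <- enum 'I_n] k.
Local Notation e := realization_edge.

Lemma realization_edgeE (i : 'I_n) : e i = u (sigma i).
Proof. by rewrite /e (nth_map i) ?size_enum_ord // nth_ord_enum. Qed.

Lemma realization_edge_closed : \sum_(0 <= i < n) e i = 0.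
Proof.
rewrite big_mkord (eq_bigr _ (fun i _ => realization_edgeE i)).
by have := u_closed; rewrite (reindex_perm sigma).
Qed.

Lemma size_realization : size L = n.
Proof. by rewrite size_map size_enum_ord. Qed.

Lemma proj_vtx_realization (k : 'I_n) : proj_xy (vtx L k) = pvtx c e k.
Proof.
rewrite vtx_small ?size_realization // (nth_map k) ?size_enum_ord // nth_ord_enum.
apply/rowP => i; rewrite !mxE /= ltn_ord inord_val /pvtx big_mkord (big_ord_widen n) 1?ltnW //.
by congr (_ + _); rewrite !summxE; apply: eq_bigr => j _; rewrite realization_edgeE.
Qed.

Lemma proj_on_edge_realization i t : (i < n)%N -> proj_xy (on_edge L i t) = pedge c e i t.
Proof.
move=> i_lt_n; have vtxS : proj_xy (vtx L i.+1) = pvtx c e i.+1.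
  move: (i_lt_n); rewrite leq_eqVlt => /orP[/eqP i1n|i1n]; last first.
    exact: (proj_vtx_realization (Ordinal i1n)).
  rewrite -(vtx_mod L) size_realization i1n modnn pvtxn ?realization_edge_closed //.
  exact: (proj_vtx_realization (Ordinal (leq_ltn_trans (leq0n i) i_lt_n))).
rewrite /on_edge proj_xyD proj_xyZ proj_xyB vtxS (proj_vtx_realization (Ordinal i_lt_n)) /=.
by rewrite pvtxSB.
Qed.

Lemma proj_on_curve_realization x : on_curve L x -> on_ppolygon n c e (proj_xy x).
Proof.
move=> [i [t [iL [t01 ->]]]]; rewrite size_realization in iL.
by exists i, t; rewrite proj_on_edge_realization.
Qed.

End Realization.

Theorem theorem2p4 (R : realType) (n : nat) (w : 'I_n -> 'rV[R]_3) :
  \sum_(k < n) proj_xy (w k) = 0 ->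
  exists sigma : 'S_n,
    forall (c : 'rV[R]_2) (h : 'I_n -> R),
      simple_polygon (realization (fun k => proj_xy (w k)) sigma c h) ->
      is_unknot (realization (fun k => proj_xy (w k)) sigma c h).
Proof.
set u := fun k => proj_xy (w k) => u_closed.
have [sigma u_sorted] := sorting_perm u (@arg_le_total R) (@arg_le_trans R) (@arg_le_refl R).
exists sigma => c h simple; set e := realization_edge u sigma.
have e_sorted i j : (i <= j < n)%N -> arg_le (e i) (e j).
  case/andP=> ij jn; have i_lt_n := leq_ltn_trans ij jn.
  rewrite -[i]/(nat_of_ord (Ordinal i_lt_n)) -[j]/(nat_of_ord (Ordinal jn)).
  by rewrite /e !realization_edgeE; apply: u_sorted.
have [p p_star] := convex_polygon_star c (realization_edge_closed sigma u_closed) e_sorted.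
apply: star_unknot simple (star_center_preimage (O := lift_xy p) _ _ _ _).
- exact: proj_xyB.
- exact: proj_xyZ.
- exact: proj_on_curve_realization u_closed.
- by rewrite proj_lift_xy.
Qed.
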